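(* Let $(\mathfrak{S}Sym)^*$ be the graded dual Hopf algebra of $\mathfrak{S}Sym$, with bases $\{\mathcal{F}^*_u\}$ and $\{\mathcal{M}^*_u\}$ dual to $\{\mathcal{F}_u\}$ and $\{\mathcal{M}_u\}$. The linear map $\Theta\colon(\mathfrak{S}Sym)^*\to\mathfrak{S}Sym$, $\mathcal{F}^*_u\mapsto\mathcal{F}_{u^{-1}}$, is an isomorphism of Hopf algebras, and for every $u\in\mathfrak{S}_n$, $$\Theta(\mathcal{M}^*_u)=\sum_{v\in\mathfrak{S}_n}\theta(u,v)\,\mathcal{M}_v,\qquad\theta(u,v)=\#\{x\in\mathfrak{S}_n:x\le u,\ x^{-1}\le v\}.$$
   Context: Permutations in one-line notation, product is composition. $\mathfrak{S}Sym$ is the graded Hopf algebra over $\mathbb{Q}$ with basis $\{\mathcal{F}_u:u\in\mathfrak{S}_n,n\ge0\}$ (degree $n$), product $\mathcal{F}_u\cdot\mathcal{F}_v=\sum_\zeta\mathcal{F}_{(u\times v)\zeta^{-1}}$ over $\zeta\in\mathfrak{S}_{p+q}$ increasing on $[1,p]$ and on $[p+1,p+q]$ (for $u\in\mathfrak{S}_p,v\in\mathfrak{S}_q$, with $(u\times v)(i)=u_i$, $i\le p$, $(u\times v)(p+j)=p+v_j$), coproduct $\Delta(\mathcal{F}_u)=\sum_{p=0}^n\mathcal{F}_{\mathrm{st}(u_1..u_p)}\otimes\mathcal{F}_{\mathrm{st}(u_{p+1}..u_n)}$ where $\mathrm{st}$ gives the permutation with the same relative order. Weak order: $u\le v$ iff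 $\mathrm{Inv}(u)\subseteq\mathrm{Inv}(v)$, $\mathrm{Inv}(u)=\{(i,j):i<j,u_i>u_j\}$; Möbius function $\mu$; $\mathcal{M}_u=\sum_{v\ge u}\mu(u,v)\mathcal{F}_v$. The graded dual has degree-$n$ component the linear dual of the degree-$n$ component, with the dual structure maps. *)

(* The Malvenuto--Reutenauer Hopf algebra SSym over Q,
   realised as the free Q-vector space {malg rat[Perm]} on the set of all
   permutations of all sizes (basis F_u = << u >>).  Permutations of size n are
   elements of 'S_n, i.e. bijections of {0,...,n-1} (one-line notation with
   values shifted by -1; only relative orders matter). *)
From HB Require Import structures.
From mathcomp Require Import all_boot all_order all_algebra all_fingroup.
From mathcomp Require Import finmap.
From mathcomp.multinomials Require Import monalg.

Set Implicit Arguments.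
Unset Strict Implicit.
Unset Printing Implicit Defensive.

Import GRing.Theory.
Local Open Scope ring_scope.

Definition Perm := {n : nat & 'S_n}.
Definition mkP n (u : 'S_n) : Perm := Tagged (fun n => 'S_n) u.

(* composition, written as in the paper: (comp u v) i = u (v i).
   (Note: MathComp's (u * v)%g applies u first.) *)
Definition comp n (u v : 'S_n) : 'S_n := (v * u)%g.

Lemma compE n (u v : 'S_n) i : comp u v i = u (v i).
Proof. by rewrite /comp permM. Qed.

Definition cross_fun p q (u : 'S_p) (v : 'S_q) (i : 'I_(p + q)) : 'I_(p + q) :=
  match split i with
  | inl a => lshift q (u a)
  | inr b => rshift p (v b)
  end.

Lemma cross_inj p q (u : 'S_p) (v : 'S_q) : injective (cross_fun u v).
Proof.
move=> i j; rewrite /cross_fun => H.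
rewrite -(splitK i) -(splitK j).
move: H; case: (split i) => [a|b]; case: (split j) => [a'|b'] /= H.
- by move: H => /(congr1 val) /= /val_inj /perm_inj ->.
- by move: H => /(congr1 val) /= H; have := ltn_ord (u a); rewrite H ltnNge leq_addr.
- by move: H => /(congr1 val) /= H; have := ltn_ord (u a'); rewrite -H ltnNge leq_addr.
- by move: H => /(congr1 val) /= /eqP; rewrite eqn_add2l => /eqP /val_inj /perm_inj ->.
Qed.

Definition cross p q (u : 'S_p) (v : 'S_q) : 'S_(p + q) := perm (@cross_inj p q u v).

(* zeta increasing on [0,p) and on [p,p+q) *)
Definition shuffle_perm p q (z : 'S_(p + q)) : bool :=
  [forall i : 'I_(p + q), forall j : 'I_(p + q),
     ((i < j)%N && (((j < p)%N) || ((p <= i)%N))) ==> (z i < z j)%N].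

Definition is_st p (s : seq nat) (a : 'S_p) : bool :=
  (size s == p) &&
  [forall i : 'I_p, forall j : 'I_p, (a i < a j)%N == (nth 0%N s i < nth 0%N s j)%N].

Definition word n (u : 'S_n) : seq nat := [seq val (u i) | i <- enum 'I_n].

Definition inv_pair n (u : 'S_n) (i j : 'I_n) : bool := (i < j)%N && (u j < u i)%N.
Definition weak_le n (u v : 'S_n) : bool :=
  [forall i, forall j, inv_pair u i j ==> inv_pair v i j].
Definition weak_lt n (u v : 'S_n) : bool := (u != v) && weak_le u v.

(* Defined with fuel; the fuel #|Inv y| + 1 is sufficient since the number of
   inversions strictly decreases along z < y. *)
Fixpoint mu_aux n (fuel : nat) (x y : 'S_n) : rat :=
  match fuel with
  | 0 => 0
  | k.+1 =>
      if x == y then 1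
      else if weak_le x y then
        - \sum_(z : 'S_n | weak_le x z && weak_lt z y) mu_aux k x z
      else 0
  end.

Definition ninv n (u : 'S_n) : nat := #|[set ij : 'I_n * 'I_n | inv_pair u ij.1 ij.2]|.
Definition mu n (x y : 'S_n) : rat := mu_aux (ninv y).+1 x y.

Definition SSym := {malg rat[Perm]}.
Definition SSym2 := {malg rat[(Perm * Perm)%type]}.

Definition F n (u : 'S_n) : SSym := << mkP u >>.

Definition prodF (x y : Perm) : SSym :=
  let: existT p u := x in let: existT q v := y in
  \sum_(z : 'S_(p + q) | @shuffle_perm p q z) F (comp (cross u v) z^-1%g).

Definition coprodF (x : Perm) : SSym2 :=
  let: existT n u := x in
  \sum_(p < n.+1) \sum_(a : 'S_p) \sum_(b : 'S_(n - p))
     if is_st (take p (word u)) a && is_st (drop p (word u)) b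
     then << (mkP a, mkP b) >> else 0.

Definition mulS (f g : SSym) : SSym :=
  \sum_(x <- msupp f) \sum_(y <- msupp g) (f@_x * g@_y) *: prodF x y.
Definition coprod (f : SSym) : SSym2 :=
  \sum_(x <- msupp f) f@_x *: coprodF x.

Definition empty_perm : Perm := mkP (1%g : 'S_0).
Definition unit_S : SSym := << empty_perm >>.
Definition counit (f : SSym) : rat := f@_empty_perm.

Definition M n (u : 'S_n) : SSym := \sum_(v : 'S_n | weak_le u v) mu u v *: F v.

(* An element of the graded dual (direct sum over n of the linear duals
   of the degree-n components) is a finitely supported family of values
   phi(F_w); it is stored as {malg rat[Perm]}, phi@_w = phi(F_w), so that
   F*_u = << u >>.  *)

Definition SSymD := {malg rat[Perm]}.
Definition SSymD2 := {malg rat[(Perm * Perm)%type]}.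

Definition pairing (phi : SSymD) (f : SSym) : rat :=
  \sum_(w <- msupp f) phi@_w * f@_w.

Definition size_of (x : Perm) : nat := tag x.

(* dual product: (F*_a F*_b)(F_w) = (F*_a (x) F*_b)(Delta F_w) *)
Definition mulDF (a b : Perm) : SSymD :=
  \sum_(w : 'S_(size_of a + size_of b)) (coprodF (mkP w))@_(a, b) *: << mkP w >>.
(* dual coproduct: (Delta F*_w)(F_a (x) F_b) = F*_w (F_a F_b) *)
Definition coprodDF (w : Perm) : SSymD2 :=
  let: existT n _ := w in
  \sum_(p < n.+1) \sum_(a : 'S_p) \sum_(b : 'S_(n - p))
     (prodF (mkP a) (mkP b))@_w *: << (mkP a, mkP b) >>.

Definition mulD (f g : SSymD) : SSymD :=
  \sum_(x <- msupp f) \sum_(y <- msupp g) (f@_x * g@_y) *: mulDF x y.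
Definition coprodD (f : SSymD) : SSymD2 :=
  \sum_(x <- msupp f) f@_x *: coprodDF x.
(* unit of the dual = counit of SSym viewed as a functional = F*_{()} *)
Definition unitD : SSymD := << empty_perm >>.
Definition counitD (phi : SSymD) : rat := pairing phi unit_S.

Definition pinv (x : Perm) : Perm := mkP (tagged x)^-1%g.

Definition Theta (phi : SSymD) : SSym :=
  \sum_(x <- msupp phi) phi@_x *: << pinv x >>.
Definition Theta2 (t : SSymD2) : SSym2 :=
  \sum_(xy <- msupp t) t@_xy *: << (pinv xy.1, pinv xy.2) >>.

Definition theta n (u v : 'S_n) : nat :=
  #|[set x : 'S_n | weak_le x u && weak_le x^-1%g v]|.

Definition is_Mdual n (u : 'S_n) (phi : SSymD) : Prop :=
  forall m (v : 'S_m), pairing phi (M v) = (mkP v == mkP u)%:R.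

(* Theta acts on coefficients by (Theta f)_w = f_(w^-1), so it is a linear involution.
   Both structure constants reduce to one shuffle condition: the first p and the
   last q letters of w standardize to a and b iff w (a x b)^-1 is increasing on
   [1,p] and on [p+1,p+q], i.e. iff w^-1 = (a^-1 x b^-1) zeta^-1 for a shuffle zeta.
   So the coefficient of F*_w in F*_a F*_b is that of F_(w^-1) in F_(a^-1) F_(b^-1),
   and dually for the coproducts.  For the dual monomial basis, Moebius inversion on
   the weak order gives F_z = sum_(v >= z) M_v, hence M*_u = sum_(x <= u) F*_x;
   applying Theta and expanding each F_(x^-1) in the M basis again counts the x with
   x <= u and x^-1 <= v. *)

From Pilot Require Import Defs.
From HB Require Import structures.
From mathcomp Require Import all_boot all_order all_algebra all_fingroup.
From mathcomp Require Import finmap.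
From mathcomp.multinomials Require Import monalg.
From mathcomp Require Import zify.
Import GRing.Theory.
Set Implicit Arguments.
Unset Strict Implicit.
Unset Printing Implicit Defensive.
Local Open Scope fset_scope.
Local Open Scope ring_scope.

(** * Relabelling finitely supported functions *)

Section Relabel.
Variables (R : ringType) (K : choiceType).
Implicit Types (g : {malg R[K]}) (d : {fset K}).

Lemma big_msupp_sub (V : zmodType) g d (H : K -> R -> V) :
  (forall k, H k 0 = 0) -> msupp g `<=` d ->
  \sum_(k <- msupp g) H k g@_k = \sum_(k <- d) H k g@_k.
Proof. by move=> H0 le; apply: big_fset_incl => // k _ /mcoeff_outdom ->. Qed.

Lemma mcoeff_sum I (r : seq I) (P : pred I) (G : I -> {malg R[K]}) k :
  (\sum_(i <- r | P i) G i)@_k = \sum_(i <- r | P i) (G i)@_k.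
Proof. exact: raddf_sum. Qed.

Definition relabel (s : K -> K) g : {malg R[K]} :=
  \sum_(k <- msupp g) g@_k *: << s k >>.

Variables (s : K -> K) (sK : involutive s).

Lemma mcoeff_relabel g y : (relabel s g)@_y = g@_(s y).
Proof.
rewrite {2}(monalgE g) !raddf_sum /=; apply: eq_bigr => k _.
by rewrite mcoeffZ !mcoeffU inv_eq // mulr_natr.
Qed.

Lemma relabel_is_linear : linear (relabel s).
Proof.
by move=> c f g; apply/malgP => y; rewrite mcoeffD mcoeffZ !mcoeff_relabel mcoeffD mcoeffZ.
Qed.

Lemma relabelK : involutive (relabel s).
Proof. by move=> g; apply/malgP => y; rewrite !mcoeff_relabel sK. Qed.

Lemma relabelU c k : relabel s << c *g k >> = << c *g s k >>.
Proof. by apply/malgP => y; rewrite mcoeff_relabel !mcoeffU inv_eq. Qed.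

Lemma big_msupp_relabel (V : zmodType) g (H : K -> R -> V) :
  (forall k, H k 0 = 0) ->
  \sum_(k <- msupp (relabel s g)) H k (relabel s g)@_k =
  \sum_(k <- msupp g) H (s k) g@_k.
Proof.
move=> H0; have le : msupp (relabel s g) `<=` [fset s k | k in msupp g].
  apply/fsubsetP => k; rewrite -mcoeff_neq0 mcoeff_relabel mcoeff_neq0 => kg.
  by apply/imfsetP; exists (s k); rewrite ?sK.
rewrite (big_msupp_sub H0 le) big_imfset /=; last by move=> x y _ _; apply: (can_inj sK).
by apply: eq_bigr => k _; rewrite mcoeff_relabel sK.
Qed.

End Relabel.

Lemma eq_mkP n (x y : 'S_n) : (mkP x == mkP y) = (x == y).
Proof. by rewrite /mkP eq_Tagged. Qed.

Lemma mkP_eqF m n (x : 'S_m) (y : 'S_n) : m != n -> (mkP x == mkP y) = false.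
Proof. by move=> mn; apply/negbTE/negP => /eq_tag /= /eqP; rewrite (negbTE mn). Qed.

Lemma pinvK : involutive pinv.
Proof. by case=> n s; rewrite /pinv /= invgK. Qed.

Lemma pinv_empty : pinv empty_perm = empty_perm.
Proof. by rewrite /pinv /empty_perm /= invg1. Qed.

(** * Standardization and shuffles *)

Section Cross.
Local Open Scope nat_scope.
Variables p q : nat.
Implicit Types (a : 'S_p) (b : 'S_q).

Lemma cross_lshift a b i : cross a b (lshift q i) = lshift q (a i).
Proof. by rewrite permE /cross_fun -[lshift q i]/(unsplit (inl i)) unsplitK. Qed.

Lemma cross_rshift a b i : cross a b (rshift p i) = rshift p (b i).
Proof. by rewrite permE /cross_fun -[rshift p i]/(unsplit (inr i)) unsplitK. Qed.

Lemma crossM a a' b b' : cross (a * a')%g (b * b')%g = (cross a b * cross a' b')%g.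
Proof.
apply/permP => i; rewrite -(splitK i); case: (split i) => [x|y] /=.
  by rewrite permM !cross_lshift permM.
by rewrite permM !cross_rshift permM.
Qed.

Lemma cross1 : cross (1%g : 'S_p) (1%g : 'S_q) = 1%g.
Proof.
apply/permP => i; rewrite -(splitK i); case: (split i) => [x|y] /=.
  by rewrite cross_lshift !perm1.
by rewrite cross_rshift !perm1.
Qed.

Lemma crossV a b : (cross a b)^-1%g = cross a^-1 b^-1.
Proof. by apply: (mulgI (cross a b)); rewrite mulgV -crossM !mulgV cross1. Qed.

Lemma shuffle_permE (z : 'S_(p + q)) :
  shuffle_perm z =
  [forall x : 'I_p, forall y : 'I_p, (x < y) ==> (z (lshift q x) < z (lshift q y))] &&
  [forall x : 'I_q, forall y : 'I_q, (x < y) ==> (z (rshift p x) < z (rshift p y))].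
Proof.
apply/forallP/andP => [H|[/forallP H1 /forallP H2] i].
  split; apply/forallP => x; apply/forallP => y; apply/implyP => xy.
    have /forallP/(_ (lshift q y))/implyP := H (lshift q x); apply.
    by rewrite /= xy ltn_ord.
  have /forallP/(_ (rshift p y))/implyP := H (rshift p x); apply.
  by rewrite /= ltn_add2l xy leq_addr orbT.
apply/forallP => j; rewrite -(splitK i) -(splitK j).
case: (split i) => [x|x]; case: (split j) => [y|y] /=; apply/implyP.
- by move=> /andP [xy _]; have /forallP/(_ y)/implyP := H1 x; apply.
- by have := ltn_ord x; have := ltn_ord y; lia.
- by have := ltn_ord x; have := ltn_ord y; lia.
- by move=> /andP [xy _]; have /forallP/(_ y)/implyP := H2 x; apply; rewrite ltn_add2l in xy.
Qed.

End Cross.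

Section Standardization.
Local Open Scope nat_scope.

Lemma nth_word n (w : 'S_n) (i : 'I_n) : nth 0 (word w) i = w i.
Proof. by rewrite /word (nth_map i) ?size_enum_ord // nth_ord_enum. Qed.

Lemma size_word n (w : 'S_n) : size (word w) = n.
Proof. by rewrite size_map size_enum_ord. Qed.

Variables p q : nat.

Lemma is_st_take (w : 'S_(p + q)) (a : 'S_p) :
  is_st (take p (word w)) a =
  [forall i, forall j, (a i < a j) == (w (lshift q i) < w (lshift q j))].
Proof.
rewrite /is_st size_takel ?size_word ?leq_addr // eqxx /=.
apply: eq_forallb => i; apply: eq_forallb => j.
by rewrite !nth_take ?ltn_ord // -[val i]/(val (lshift q i)) -[val j]/(val (lshift q j)) !nth_word.
Qed.

Lemma is_st_drop (w : 'S_(p + q)) (b : 'S_q) :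
  is_st (drop p (word w)) b =
  [forall i, forall j, (b i < b j) == (w (rshift p i) < w (rshift p j))].
Proof.
rewrite /is_st size_drop size_word addKn eqxx /=.
apply: eq_forallb => i; apply: eq_forallb => j.
by rewrite !nth_drop -[p + i]/(val (rshift p i)) -[p + j]/(val (rshift p j)) !nth_word.
Qed.

Lemma same_order_mono (T : finType) (f g : T -> nat) : injective f -> injective g ->
  [forall i, forall j, (f i < f j) == (g i < g j)] =
  [forall i, forall j, (f i < f j) ==> (g i < g j)].
Proof.
move=> f_inj g_inj; apply/forallP/forallP => H i; apply/forallP => j.
  by have /forallP/(_ j)/eqP <- := H i; apply/implyP.
have /forallP/(_ j)/implyP Hij := H i; have /forallP/(_ i)/implyP Hji := H j.
case: (ltngtP (f i) (f j)) => [/Hij -> //| /Hji gji|/f_inj ->]; last by rewrite ltnn.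
by apply/eqP/esym/negbTE; rewrite -leqNgt ltnW.
Qed.

Lemma forall2_perm (T : finType) (s : {perm T}) (P : T -> T -> bool) :
  [forall i, forall j, P i j] = [forall x, forall y, P (s^-1%g x) (s^-1%g y)].
Proof.
apply/forallP/forallP => H i; apply/forallP => j.
  by have /forallP := H (s^-1%g i); apply.
by have /forallP/(_ (s j)) := H (s i); rewrite !permK.
Qed.

Lemma is_st_split_shuffle (w : 'S_(p + q)) (a : 'S_p) (b : 'S_q) :
  is_st (take p (word w)) a && is_st (drop p (word w)) b =
  shuffle_perm (Defs.comp w (cross a b)^-1%g).
Proof.
have perm_val_inj m (u : 'S_m) : injective (fun i => val (u i)).
  by move=> i j /val_inj /perm_inj.
rewrite is_st_take is_st_drop shuffle_permE crossV; congr andb.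
  rewrite same_order_mono; [|exact: perm_val_inj|by move=> i j /perm_val_inj /lshift_inj].
  rewrite (forall2_perm a); apply: eq_forallb => x; apply: eq_forallb => y.
  by rewrite !permKV !Defs.compE !cross_lshift.
rewrite same_order_mono; [|exact: perm_val_inj|by move=> i j /perm_val_inj /rshift_inj].
rewrite (forall2_perm b); apply: eq_forallb => x; apply: eq_forallb => y.
by rewrite !permKV !Defs.compE !cross_rshift.
Qed.

End Standardization.

(** * Theta and the Hopf structures *)

Definition pinv2 (xy : Defs.Perm * Defs.Perm) : Defs.Perm * Defs.Perm := (pinv xy.1, pinv xy.2).

Lemma pinv2K : involutive pinv2.
Proof. by case=> x y; rewrite /pinv2 /= !pinvK. Qed.

(* [Theta] and [Theta2] unfold to [relabel pinv] and [relabel pinv2]. *)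
HB.instance Definition _ :=
  GRing.isLinear.Build rat SSymD SSym _ Theta (relabel_is_linear pinvK).
HB.instance Definition _ :=
  GRing.isLinear.Build rat SSymD2 SSym2 _ Theta2 (relabel_is_linear pinv2K).

Lemma ThetaE f y : (Theta f)@_y = f@_(pinv y).
Proof. exact: (mcoeff_relabel pinvK). Qed.

Lemma Theta_sum I (r : seq I) (P : pred I) (G : I -> SSymD) :
  Theta (\sum_(i <- r | P i) G i) = \sum_(i <- r | P i) Theta (G i).
Proof. exact: raddf_sum. Qed.

Lemma ThetaZ c f : Theta (c *: f) = c *: Theta f.
Proof. exact: linearZ. Qed.

Lemma Theta2Z c t : Theta2 (c *: t) = c *: Theta2 t.
Proof. exact: linearZ. Qed.

Lemma Theta2_sum I (r : seq I) (P : pred I) (G : I -> SSymD2) :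
  Theta2 (\sum_(i <- r | P i) G i) = \sum_(i <- r | P i) Theta2 (G i).
Proof. exact: raddf_sum. Qed.

Lemma ThetaU c k : Theta << c *g k >> = << c *g pinv k >>.
Proof. exact: (relabelU pinvK). Qed.

Lemma Theta2U c x y : Theta2 << c *g (x, y) >> = << c *g (pinv x, pinv y) >>.
Proof. exact: (relabelU pinv2K). Qed.

Lemma is_st_cast m n (e : m = n) s (b : 'S_m) : is_st s (cast_perm e b) = is_st s b.
Proof. by subst n; rewrite cast_perm_id. Qed.

Lemma sum_mkP_cast {R : ringType} m n (e : n = m) (b : 'S_n) (P : pred 'S_m) :
  \sum_(b' : 'S_m) ((P b' && (mkP b' == mkP b))%:R : R) = (P (cast_perm e b))%:R.
Proof.
subst m; rewrite cast_perm_id (bigD1 b) //= eq_mkP eqxx andbT big1 ?addr0 //.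
by move=> b' nb; rewrite eq_mkP (negbTE nb) andbF.
Qed.

Lemma coprodF_coef p q (w : 'S_(p + q)) (a : 'S_p) (b : 'S_q) :
  (coprodF (mkP w))@_(mkP a, mkP b) =
  (is_st (take p (word w)) a && is_st (drop p (word w)) b)%:R.
Proof.
rewrite /coprodF /=.
transitivity (\sum_(i < (p + q).+1) \sum_(a' : 'S_i) \sum_(b' : 'S_(p + q - i))
   ((((is_st (take i (word w)) a' && (mkP a' == mkP a)) &&
     (is_st (drop i (word w)) b' && (mkP b' == mkP b))))%:R : rat)).
  rewrite mcoeff_sum; apply: eq_bigr => i _; rewrite mcoeff_sum; apply: eq_bigr => a' _.
  rewrite mcoeff_sum; apply: eq_bigr => b' _.
  case: ifP => [/andP [-> ->]|]; first by rewrite mcoeffU xpair_eqE.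
  by rewrite mcoeff0; case: (is_st _ a'); case: (is_st _ b'); rewrite ?andbF.
have p_lt : (p < (p + q).+1)%N by rewrite ltnS leq_addr.
rewrite (bigD1 (Ordinal p_lt)) //= [X in _ + X]big1 ?addr0; last first.
  move=> i ni; apply: big1 => a' _; apply: big1 => b' _.
  have ip : (val i != p) by apply: contra ni => /eqP e; apply/eqP/val_inj.
  by rewrite mkP_eqF ?andbF.
rewrite (bigD1 a) //= eq_mkP eqxx andbT [X in _ + X]big1 ?addr0; last first.
  by move=> a' na; apply: big1 => b' _; rewrite eq_mkP (negbTE na) andbF.
have e : q = (p + q - p)%N by rewrite addKn.
case: (is_st (take p (word w)) a) => /=; last by apply: big1.
by rewrite (sum_mkP_cast e) is_st_cast.
Qed.

Lemma prodF_coef p q n (e : (p + q)%N = n) (a : 'S_p) (b : 'S_q) (w : 'S_n) :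
  (prodF (mkP a) (mkP b))@_(mkP w) =
  (is_st (take p (word w^-1%g)) a^-1%g && is_st (drop p (word w^-1%g)) b^-1%g)%:R.
Proof.
subst n; rewrite /prodF mcoeff_sum.
pose c := cross a b.
rewrite is_st_split_shuffle -crossV invgK -/c.
rewrite big_mkcond (bigD1 (c * w^-1)%g) //= [X in _ + X]big1 ?addr0.
  case: (shuffle_perm _) => //.
  by rewrite mcoeffU eq_mkP /Defs.comp invMg invgK -mulgA mulVg mulg1 eqxx.
move=> z nz; case: (shuffle_perm z) => //.
rewrite mcoeffU eq_mkP; case: eqP => // E; case/eqP: nz.
by rewrite -E /Defs.comp invMg invgK mulgA mulgV mul1g.
Qed.

Lemma Theta_mulDF x y : Theta (mulDF x y) = prodF (pinv x) (pinv y).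
Proof.
case: x => p a; case: y => q b.
rewrite /mulDF Theta_sum (reindex_inj (mulgI (cross a b))) [RHS]big_mkcond.
apply: eq_bigr => z _; rewrite ThetaZ ThetaU.
rewrite (coprodF_coef (cross a b * z)%g a b) is_st_split_shuffle /Defs.comp mulKg.
case: (shuffle_perm z); last by rewrite scale0r.
by rewrite scale1r /pinv /= invMg -crossV.
Qed.

Lemma Theta2_coprodDF x : Theta2 (coprodDF x) = coprodF (pinv x).
Proof.
case: x => n w; rewrite /coprodDF Theta2_sum; apply: eq_bigr => i _.
rewrite Theta2_sum [RHS](reindex_inj invg_inj); apply: eq_bigr => a _.
rewrite Theta2_sum [RHS](reindex_inj invg_inj); apply: eq_bigr => b _.
rewrite Theta2Z Theta2U.
have e : (i + (n - i))%N = n by rewrite subnKC // -ltnS.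
by rewrite (prodF_coef e a b w); case: (_ && _); rewrite ?scale1r ?scale0r.
Qed.

Lemma Theta_mul f g : Theta (mulD f g) = mulS (Theta f) (Theta g).
Proof.
rewrite /mulD /mulS Theta_sum (big_msupp_relabel pinvK _ (H := fun x c =>
  \sum_(y <- msupp (Theta g)) (c * (Theta g)@_y) *: prodF x y)); last first.
  by move=> k; apply: big1 => y _; rewrite mul0r scale0r.
apply: eq_bigr => x _; rewrite Theta_sum (big_msupp_relabel pinvK _ (H := fun y c =>
  (f@_x * c) *: prodF (pinv x) y)); last by move=> k; rewrite mulr0 scale0r.
by apply: eq_bigr => y _; rewrite ThetaZ Theta_mulDF.
Qed.

Lemma Theta_coprod f : coprod (Theta f) = Theta2 (coprodD f).
Proof.
rewrite /coprod /coprodD Theta2_sum.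
rewrite (big_msupp_relabel pinvK _ (H := fun x c => c *: coprodF x)); last by move=> k; rewrite scale0r.
by apply: eq_bigr => x _; rewrite Theta2Z Theta2_coprodDF.
Qed.

Lemma Theta_unit : Theta unitD = unit_S.
Proof. by rewrite ThetaU pinv_empty. Qed.

Lemma Theta_counit f : counit (Theta f) = counitD f.
Proof.
rewrite /counit ThetaE pinv_empty /counitD /pairing msuppU oner_eq0.
by rewrite big_seq_fset1 mcoeffU eqxx mulr1.
Qed.

(** * The weak order and its Moebius function *)

Section WeakOrder.
Variable n : nat.
Implicit Types u v w x y z : 'S_n.

Lemma card_ord_lt m : (m <= n)%N -> #|[set k : 'I_n | (k < m)%N]| = m.
Proof.
move=> mn; have -> : [set k : 'I_n | (k < m)%N] = [set widen_ord mn k | k in 'I_m].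
  apply/setP => k; rewrite inE; apply/idP/imsetP => [km|[k' _ ->]] //=.
  by exists (Ordinal km) => //; apply/val_inj.
by rewrite card_imset ?card_ord // => a b /(congr1 val) /= /val_inj.
Qed.

Lemma card_perm_lt u i : #|[set j | (u j < u i)%N]| = u i.
Proof.
have -> : [set j | (u j < u i)%N] = u @^-1: [set k : 'I_n | (k < u i)%N].
  by apply/setP => j; rewrite !inE.
by rewrite card_preimset ?card_ord_lt ?(ltnW (ltn_ord _)) //; apply: perm_inj.
Qed.

(* [u i] counts the [j] with [u j < u i], and these are read off the inversions. *)
Lemma eq_inv_pair_perm u v : (forall i j, Defs.inv_pair u i j = Defs.inv_pair v i j) -> u = v.
Proof.
move=> Huv; apply/permP => i; apply/val_inj.
rewrite /= -card_perm_lt -(card_perm_lt v).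
suff -> : [set j | (u j < u i)%N] = [set j | (v j < v i)%N] by [].
apply/setP => j; rewrite !inE.
have lt_inv w : (w j < w i)%N =
    if (j < i)%N then ~~ Defs.inv_pair w j i else (i < j)%N && Defs.inv_pair w i j.
  rewrite /Defs.inv_pair; case: (ltngtP j i) => [ji|ij|/val_inj ->] /=; last by rewrite ltnn.
    by rewrite ltn_neqAle -leqNgt (inj_eq val_inj) (inj_eq perm_inj) neq_ltn ji.
  by [].
by rewrite !lt_inv !Huv.
Qed.

Lemma weak_leP u v :
  reflect (forall i j, Defs.inv_pair u i j -> Defs.inv_pair v i j) (weak_le u v).
Proof.
apply: (iffP forallP) => [H i j|H i]; first by have /forallP/(_ j)/implyP := H i.
by apply/forallP => j; apply/implyP/H.
Qed.

Lemma weak_le_refl u : weak_le u u.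
Proof. exact/weak_leP. Qed.

Lemma weak_le_trans u v w : weak_le u v -> weak_le v w -> weak_le u w.
Proof. by move=> /weak_leP H1 /weak_leP H2; apply/weak_leP => i j /H1 /H2. Qed.

Lemma weak_le_anti u v : weak_le u v -> weak_le v u -> u = v.
Proof.
move=> /weak_leP H1 /weak_leP H2; apply: eq_inv_pair_perm => i j.
by apply/idP/idP => [/H1|/H2].
Qed.

Lemma ninv_lt u v : weak_lt u v -> (ninv u < ninv v)%N.
Proof.
move=> /andP [uv /weak_leP H]; apply: proper_card; rewrite properEneq; apply/andP; split.
  apply: contra uv => /eqP E; apply/eqP/eq_inv_pair_perm => i j.
  by have /setP/(_ (i, j)) := E; rewrite !inE.
by apply/subsetP => ij; rewrite !inE; apply: H.
Qed.

Lemma mu_aux_fuel k1 k2 x y : (ninv y < k1)%N -> (ninv y < k2)%N ->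
  mu_aux k1 x y = mu_aux k2 x y.
Proof.
elim: k1 k2 y => [//|k1 IH] [//|k2] y h1 h2 /=.
case: (x == y) => //; case: (weak_le x y) => //; congr (- _).
apply: eq_bigr => z /andP [_ /ninv_lt zy]; apply: IH.
  by apply: leq_trans zy _; rewrite -ltnS.
by apply: leq_trans zy _; rewrite -ltnS.
Qed.

Lemma mu_rec x y : mu x y =
  if x == y then 1 else if weak_le x y then
    - \sum_(z | weak_le x z && weak_lt z y) mu x z else 0.
Proof.
rewrite [LHS]/mu /=; case: (x == y) => //; case: (weak_le x y) => //; congr (- _).
apply: eq_bigr => z /andP [_ zy]; apply: mu_aux_fuel => //; exact: ninv_lt.
Qed.

Lemma mu_refl x : mu x x = 1.
Proof. by rewrite mu_rec eqxx. Qed.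

Lemma mu_nle x y : ~~ weak_le x y -> mu x y = 0.
Proof.
move=> nxy; rewrite mu_rec (negbTE nxy); case: eqP => // E.
by rewrite E weak_le_refl in nxy.
Qed.

Lemma mu_zeta x y : \sum_(z | weak_le z y) mu x z = (x == y)%:R.
Proof.
case: (eqVneq x y) => [<-|nxy].
  rewrite (bigD1 x) ?weak_le_refl //= mu_refl big1 ?addr0 // => z /andP [zx nzx].
  case: (boolP (weak_le x z)) => [xz|/mu_nle //].
  by case/eqP: nzx; apply: weak_le_anti.
case: (boolP (weak_le x y)) => [xy|nxy']; last first.
  apply: big1 => z zy; apply: mu_nle; apply: contra nxy' => xz.
  exact: weak_le_trans zy.
rewrite (bigD1 y) ?weak_le_refl //= mu_rec (negbTE nxy) xy /=.
rewrite addrC; apply/eqP; rewrite subr_eq0; apply/eqP.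
rewrite [LHS](bigID (weak_le x)) /= [X in _ + X]big1 ?addr0; last first.
  by move=> z /andP [_ /mu_nle].
apply: eq_bigl => z; rewrite /weak_lt.
by case: (weak_le x z); case: (weak_le z y); case: (z != y).
Qed.

(* [mu] is a left inverse of the zeta matrix of the weak order, hence also a right inverse. *)
Lemma zeta_mu x y : \sum_(z | weak_le x z) mu z y = (x == y)%:R.
Proof.
pose T := {perm 'I_n}.
have sum_enum (G : T -> rat) : \sum_(z : T) G z = \sum_(k < #|T|) G (enum_val k).
  by rewrite -big_enum_val.
pose A : 'M[rat]_#|T| := \matrix_(i, j) mu (enum_val i) (enum_val j).
pose Z : 'M[rat]_#|T| := \matrix_(i, j) (weak_le (enum_val i) (enum_val j))%:R.
have AZ : A *m Z = 1%:M.
  apply/matrixP => i j; rewrite !mxE -(inj_eq enum_val_inj) -mu_zeta [RHS]big_mkcond.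
  rewrite [RHS]sum_enum; apply: eq_bigr => k _; rewrite !mxE.
  by case: (weak_le _ _); rewrite ?mulr1 ?mulr0.
have := congr1 (fun B : 'M[rat]_#|T| => B (enum_rank x) (enum_rank y)) (mulmx1C AZ).
rewrite !mxE /= (inj_eq enum_rank_inj) => <-.
rewrite big_mkcond sum_enum; apply: eq_bigr => k _; rewrite !mxE !enum_rankK.
by case: (weak_le x _); rewrite ?mul1r ?mul0r.
Qed.

End WeakOrder.

(** * The dual monomial basis *)

Lemma pairing_sub phi f d : msupp f `<=` d -> pairing phi f = \sum_(w <- d) phi@_w * f@_w.
Proof.
move=> le; rewrite /pairing (big_msupp_sub (H := fun w c => phi@_w * c) _ le) //.
by move=> w; rewrite mulr0.
Qed.

Lemma pairing_is_scalar phi : scalar (pairing phi).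
Proof.
move=> c f g; pose d := msupp f `|` msupp g.
have le_cfg : msupp (c *: f + g) `<=` d.
  by apply: fsubset_trans (msuppD_le _ _) _; rewrite fsetSU // msuppZ_le.
rewrite (pairing_sub _ le_cfg) (pairing_sub _ (fsubsetUl _ _ : msupp f `<=` d)).
rewrite (pairing_sub _ (fsubsetUr _ _ : msupp g `<=` d)) mulr_sumr -big_split /=.
by apply: eq_bigr => w _; rewrite mcoeffD mcoeffZ mulrDr mulrCA.
Qed.

HB.instance Definition _ phi :=
  GRing.isLinear.Build rat SSym rat *%R (pairing phi) (pairing_is_scalar phi).

Lemma pairing_sum phi I (r : seq I) (P : pred I) (G : I -> SSym) :
  pairing phi (\sum_(i <- r | P i) G i) = \sum_(i <- r | P i) pairing phi (G i).
Proof. exact: raddf_sum. Qed.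

Lemma pairingZ phi c f : pairing phi (c *: f) = c * pairing phi f.
Proof. exact: linearZ. Qed.

Lemma pairingU phi k : pairing phi << k >> = phi@_k.
Proof. by rewrite /pairing msuppU oner_eq0 big_seq_fset1 mcoeffU eqxx mulr1. Qed.

Lemma sum_pred_eq (R : ringType) (T : finType) (P : pred T) a :
  \sum_(v | P v) ((v == a)%:R : R) = (P a)%:R.
Proof.
rewrite big_mkcond (bigD1 a) //= eqxx big1 ?addr0; first by case: (P a).
by move=> v /negbTE ->; case: (P v).
Qed.

Section MBasis.
Variable n : nat.
Implicit Types u v z : 'S_n.

Lemma M_sum u : M u = \sum_v mu u v *: F v.
Proof.
rewrite /M [RHS](bigID (weak_le u)) /= [X in _ + X]big1 ?addr0 //.
by move=> v /mu_nle ->; rewrite scale0r.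
Qed.

Lemma F_sum_M z : F z = \sum_(v | weak_le z v) M v.
Proof.
under eq_bigr do rewrite M_sum.
rewrite exchange_big /= (bigD1 z) //= -scaler_suml zeta_mu eqxx scale1r big1 ?addr0 //.
by move=> y nzy; rewrite -scaler_suml zeta_mu eq_sym (negbTE nzy) scale0r.
Qed.

End MBasis.

Section MDual.
Variables (n : nat) (u : 'S_n).

(* M*_u = sum_(x <= u) F*_x, dual to F_z = sum_(v >= z) M_v. *)
Definition Mstar : SSymD := \sum_(x : 'S_n | weak_le x u) << mkP x >>.

Lemma Mstar_coef m (w : 'S_m) :
  Mstar@_(mkP w) = \sum_(v : 'S_m | weak_le w v) ((mkP v == mkP u)%:R : rat).
Proof.
rewrite mcoeff_sum; under eq_bigr do rewrite mcoeffU.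
case: (eqVneq m n) => [mn|nm]; last first.
  by rewrite !big1 // => x _; rewrite mkP_eqF // eq_sym.
subst m; under eq_bigr do rewrite eq_mkP; under [RHS]eq_bigr do rewrite eq_mkP.
by rewrite !sum_pred_eq.
Qed.

Lemma Mdual_coef phi : is_Mdual u phi -> forall m (w : 'S_m),
  phi@_(mkP w) = \sum_(v : 'S_m | weak_le w v) ((mkP v == mkP u)%:R : rat).
Proof.
move=> phi_dual m w; rewrite -pairingU -/(F w) F_sum_M pairing_sum.
by apply: eq_bigr => v _; rewrite phi_dual.
Qed.

Lemma Mdual_Mstar phi : is_Mdual u phi -> phi = Mstar.
Proof.
move=> phi_dual; apply/malgP => -[m w].
by rewrite -[existT _ m w]/(mkP w) (Mdual_coef phi_dual) Mstar_coef.
Qed.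

Lemma Mstar_Mdual : is_Mdual u Mstar.
Proof.
move=> m v; rewrite M_sum pairing_sum.
under eq_bigr do rewrite pairingZ pairingU Mstar_coef mulr_sumr.
rewrite (exchange_big_dep xpredT) //=.
under eq_bigr do rewrite -mulr_suml mu_zeta.
rewrite (bigD1 v) //= eqxx mul1r big1 ?addr0 // => v' /negbTE.
by rewrite eq_sym => ->; rewrite mul0r.
Qed.

Lemma Theta_Mstar : Theta Mstar = \sum_(v : 'S_n) (theta u v)%:R *: M v.
Proof.
rewrite /Mstar Theta_sum.
rewrite (eq_bigr (fun x => \sum_(v | weak_le x^-1%g v) M v)); last first.
  by move=> x _; rewrite ThetaU -F_sum_M.
rewrite (exchange_big_dep xpredT) //=; apply: eq_bigr => v _.
by rewrite scaler_nat /theta -sumr_const; apply: eq_bigl => x; rewrite inE.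
Qed.

End MDual.

Theorem mainTheorem16 :
  (forall (c : rat) (f g : SSymD), Theta (c *: f + g) = c *: Theta f + Theta g) /\
  bijective Theta /\
  (forall f g : SSymD, Theta (mulD f g) = mulS (Theta f) (Theta g)) /\
  Theta unitD = unit_S /\
  (forall f : SSymD, coprod (Theta f) = Theta2 (coprodD f)) /\
  (forall f : SSymD, counit (Theta f) = counitD f) /\
  (forall (n : nat) (u : 'S_n),
     (exists phi : SSymD, is_Mdual u phi) /\
     (forall phi : SSymD, is_Mdual u phi ->
        Theta phi = \sum_(v : 'S_n) (theta u v)%:R *: M v)).
Proof.
split; first exact: linearP.
split; first by exists Theta; apply: (relabelK pinvK).
split; first exact: Theta_mul.
split; first exact: Theta_unit.
split; first exact: Theta_coprod.
split; first exact: Theta_counit.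
move=> n u; split; first by exists (Mstar u); apply: Mstar_Mdual.
by move=> phi /Mdual_Mstar ->; apply: Theta_Mstar.
Qed.
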